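(* For every integer $k\ge 5$, $R(k,k+1)\ge NPO(k) > T_k$, where $T_k=\frac{k(k+1)}{2}$ is the $k$-th triangular number.
   Context: All graphs are finite, simple and undirected; $A(G)$ denotes the adjacency matrix of $G$. Eigenvalues are counted with multiplicity. For a positive integer $k$, $NPO(k)$ is the smallest integer $n$ such that the adjacency matrix of every graph with at least $n$ vertices has at least $k$ nonpositive eigenvalues. The Ramsey number $R(m,n)$ is the minimum number $N$ such that every graph on at least $N$ vertices has either an independent set of size $m$ or an induced subgraph isomorphic to the complete graph $K_n$. *)

From HB Require Import structures.
From mathcomp Require Import all_boot all_order all_algebra all_field.
Set Implicit Arguments. Unset Strict Implicit. Unset Printing Implicit Defensive.
Import Order.TTheory GRing.Theory Num.Theory.

Definition simple_graph (n : nat) (e : rel 'I_n) : Prop :=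
  (forall x y, e x y = e y x) /\ (forall x, ~~ e x x).

Definition adjmx (n : nat) (e : rel 'I_n) : 'M[algC]_n :=
  \matrix_(i, j) ((e i j)%:R : algC)%R.

(* the eigenvalues of a square matrix, listed with multiplicity
   (roots of the characteristic polynomial over the algebraically closed algC) *)
Definition eigenvalues (n : nat) (A : 'M[algC]_n) : seq algC :=
  sval (closed_field_poly_normal (char_poly A)).

Definition num_nonpos_eig (n : nat) (A : 'M[algC]_n) : nat :=
  count (fun z : algC => (z <= 0)%R) (eigenvalues A).

Definition has_indep (n : nat) (e : rel 'I_n) (a : nat) : Prop :=
  exists S : {set 'I_n}, #|S| = a /\
    (forall x y, x \in S -> y \in S -> x != y -> ~~ e x y).
Definition has_clique (n : nat) (e : rel 'I_n) (b : nat) : Prop :=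
  exists S : {set 'I_n}, #|S| = b /\
    (forall x y, x \in S -> y \in S -> x != y -> e x y).

Definition is_least (P : nat -> Prop) (N : nat) : Prop :=
  P N /\ (forall M, P M -> N <= M).

Definition ramsey_prop (a b N : nat) : Prop :=
  forall n, N <= n -> forall e : rel 'I_n, simple_graph e ->
    has_indep e a \/ has_clique e b.

Definition is_ramsey_number (a b N : nat) : Prop := is_least (ramsey_prop a b) N.

Definition npo_prop (k N : nat) : Prop :=
  forall n, N <= n -> forall e : rel 'I_n, simple_graph e ->
    k <= num_nonpos_eig (adjmx e).

Definition is_NPO (k N : nat) : Prop := is_least (npo_prop k) N.

(* Both inequalities rest on one principle of linear algebra (Courant-Fischer,
   via the spectral theorem): for a Hermitian matrix A of order n and any
   matrix M with n rows,
   - if the form x A x^* is positive on all nonzero x with x M = 0, then A has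
     at most rank M nonpositive eigenvalues (nonpos_eig_le_rank);
   - if the form is nonpositive whenever x M = 0, then A has at least
     n - rank M nonpositive eigenvalues (nonpos_eig_ge_corank).
   NPO(k) <= R(k, k+1): the form of a graph vanishes on vectors supported on
   an independent set and equals -|x|^2 on zero-sum vectors supported on a
   clique, so an independent k-set or a (k+1)-clique forces k nonpositive
   eigenvalues.
   NPO(k) > T_k: on the T_k = k + C(k, 2) nonempty subsets of size <= 2 of a
   k-set, join two distinct subsets iff (same size <-> disjoint). Writing A as
   Gram matrices minus the Gram matrix of a signed incidence matrix B, the form
   is positive on the codimension-(k-1) space where all entries of x B agree,
   as soon as k >= 5; so this graph has at most k - 1 nonpositive eigenvalues.
   Finally the finite Ramsey theorem provides R(k, k+1), below which NPO(k)
   exists; both are least elements of nonempty sets of naturals. *)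

From HB Require Import structures.
From mathcomp Require Import all_boot all_order all_algebra all_field.
From mathcomp Require Import zify ring.
From Stdlib Require Import Classical.
Set Implicit Arguments. Unset Strict Implicit. Unset Printing Implicit Defensive.

Import Order.TTheory GRing.Theory Num.Theory Num.Def.
Local Open Scope ring_scope.
Local Open Scope sesquilinear_scope.

Lemma sum_mul_delta (R : pzSemiRingType) (I : finType) (f : I -> R) (l : I) :
  \sum_i f i * (i == l)%:R = f l.
Proof.
rewrite (bigD1 l) //= eqxx mulr1 big1 ?addr0 // => i /negbTE ->.
by rewrite mulr0.
Qed.

Lemma realmx_nat m p (f : 'I_m -> 'I_p -> nat) :
  \matrix_(i, j) ((f i j)%:R : algC) \is a realmx.
Proof. by apply/mxOverP => i j; rewrite mxE realn. Qed.

Section QuadraticForm.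
Variable n : nat.
Implicit Types (A B : 'M[algC]_n) (d x : 'rV[algC]_n).

Definition qform A x : algC := (x *m A *m x^t*) 0 0.

Lemma qformD A B x : qform (A + B) x = qform A x + qform B x.
Proof. by rewrite /qform mulmxDr mulmxDl mxE. Qed.

Lemma qformB A B x : qform (A - B) x = qform A x - qform B x.
Proof. by rewrite /qform mulmxBr mulmxBl !mxE. Qed.

Lemma qform_expand A x :
  qform A x = \sum_i \sum_j x 0 i * A i j * (x 0 j)^*.
Proof.
rewrite /qform mxE exchange_big /=; apply: eq_bigr => j _.
by rewrite !mxE mulr_suml.
Qed.

Lemma qform_diag d x : qform (diag_mx d) x = \sum_i d 0 i * (x 0 i * (x 0 i)^*).
Proof.
rewrite /qform mxE; apply: eq_bigr => i _.
by rewrite mul_mx_diag !mxE mulrAC mulrC.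
Qed.

Lemma qform_gram p (G : 'M[algC]_(n, p)) x : G \is a realmx ->
  qform (G *m G^T) x = \sum_c (x *m G) 0 c * ((x *m G) 0 c)^*.
Proof.
move=> G_real; rewrite /qform mulmxA -(mulmxA _ G^T).
have -> : G^T *m x^t* = (x *m G)^t*.
  rewrite trmx_mul map_mxM; congr (_ *m _).
  by apply/matrixP => i j; rewrite !mxE; apply/esym/CrealP/(mxOverP G_real).
by rewrite mxE; apply: eq_bigr => c _; rewrite !mxE.
Qed.

End QuadraticForm.

Section Inertia.
Variable n : nat.
Implicit Types (A P : 'M[algC]_n) (d x y : 'rV[algC]_n).

Lemma hermitian_diagonalization A : A \is hermsymmx ->
  exists P d, [/\ P \is unitarymx, d \is a realmx & A = P^t* *m diag_mx d *m P].
Proof.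
move=> herA; exists (spectralmx A), (spectral_diag A); split.
- exact: spectral_unitarymx.
- exact: hermitian_spectral_diag_real.
- rewrite -invmx_unitary ?spectral_unitarymx //.
  exact/orthomx_spectralP/hermitian_normalmx.
Qed.

Lemma unitary_mulKmx P : P \is unitarymx -> P^t* *m P = 1%:M.
Proof. by move=> uP; rewrite -invmx_unitary // mulVmx // unitarymx_unit. Qed.

Lemma unitary_mulmx_eq0 P y : P \is unitarymx -> (y *m P == 0) = (y == 0).
Proof.
move=> /unitarymxP PPt; apply/eqP/eqP => [yP0|->]; last by rewrite mul0mx.
by rewrite -(mulmx1 y) -PPt mulmxA yP0 mul0mx.
Qed.

Lemma char_poly_similar (Q P D : 'M[algC]_n) : Q *m P = 1%:M ->
  char_poly (Q *m D *m P) = char_poly D.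
Proof.
move=> QP; rewrite /char_poly /char_poly_mx !map_mxM.
set Q' := map_mx polyC Q; set P' := map_mx polyC P.
have QP' : Q' *m P' = 1%:M by rewrite -map_mxM QP map_mx1.
have X_conj : ('X%:M : 'M[{poly algC}]_n) = Q' *m 'X%:M *m P'.
  by rewrite mul_mx_scalar -scalemxAl QP' scalemx1.
rewrite [X in \det (X - _)]X_conj -mulmxBl -mulmxBr !det_mulmx.
by rewrite mulrAC -det_mulmx QP' det1 mul1r.
Qed.

Lemma num_nonpos_eig_diag P d : P \is unitarymx ->
  num_nonpos_eig (P^t* *m diag_mx d *m P) = #|[set i | d 0 i <= 0]|.
Proof.
move=> uP; rewrite /num_nonpos_eig /eigenvalues.
case: closed_field_poly_normal => r /=.
rewrite char_poly_similar ?unitary_mulKmx // (monicP (char_poly_monic _)) scale1r.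
rewrite char_poly_trig ?diag_mx_is_trig //.
have -> : \prod_(i < n) ('X - (diag_mx d i i)%:P) =
   \prod_(z <- [seq d 0 i | i <- index_enum 'I_n]) ('X - z%:P).
  by rewrite big_map; apply: eq_bigr => i _; rewrite mxE eqxx mulr1n.
move=> /esym /prod_XsubC_eq /permP ->.
rewrite count_map cardE /enum_mem [index_enum _]unlock size_filter.
by apply: eq_count => i; rewrite /= inE.
Qed.

Lemma qform_unitary_diag P d y : P \is unitarymx ->
  qform (P^t* *m diag_mx d *m P) (y *m P) = \sum_i d 0 i * (y 0 i * (y 0 i)^*).
Proof.
move=> /unitarymxP PPt; rewrite /qform trmx_mul map_mxM !mulmxA.
rewrite -(mulmxA y P) PPt mulmx1 -(mulmxA _ P) PPt mulmx1.
by rewrite -qform_diag.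
Qed.

(* Dimension count: if rank N < |I|, some nonzero vector supported on I lies
   in the left kernel of N, as the rows of E span the |I|-dimensional space
   of vectors supported on I and ker N has dimension n - rank N. *)
Lemma supported_kernel_vector m (I : {set 'I_n}) (N : 'M[algC]_(n, m)) :
  (\rank N < #|I|)%N ->
  exists y, [/\ y != 0, (forall i, i \notin I -> y 0 i = 0) & y *m N = 0].
Proof.
move=> rkN.
pose E : 'M[algC]_(#|I|, n) := \matrix_(j, c) ((enum_val j == c)%:R).
have EEt : E *m E^T = 1%:M.
  apply/matrixP => j1 j2; rewrite !mxE (bigD1 (enum_val j1)) //= big1.
    by rewrite !mxE eqxx mul1r addr0 (inj_eq enum_val_inj) eq_sym.
  by move=> c /negbTE c_neq; rewrite !mxE eq_sym c_neq mul0r.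
have rkE : \rank E = #|I|.
  apply/eqP; rewrite eqn_leq rank_leq_row /=.
  by rewrite -{1}(mxrank1 algC #|I|) -EEt mxrankM_maxl.
have cap_neq0 : \rank (E :&: kermx N)%MS != 0%N.
  have := mxrank_sum_cap E (kermx N); rewrite mxrank_ker rkE.
  have := rank_leq_col (E + kermx N)%MS; have := rank_leq_row N.
  have : (#|I| <= n)%N by rewrite -[X in (_ <= X)%N]card_ord max_card.
  lia.
move: cap_neq0; rewrite mxrank_eq0 -nz_row_eq0; set y := nz_row _ => y_neq0.
have yE : (y <= E)%MS := submx_trans (nz_row_sub _) (capmxSl _ _).
have yN : (y <= kermx N)%MS := submx_trans (nz_row_sub _) (capmxSr _ _).
exists y; split => //; last exact/sub_kermxP.
move=> i iI; case/submxP: yE => D ->; rewrite mxE big1 // => j _.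
rewrite mxE; case: eqP => [ji|_]; last by rewrite mulr0.
by move: iI; rewrite -ji enum_valP.
Qed.

Lemma nonpos_eig_le_rank m A (M : 'M[algC]_(n, m)) : A \is hermsymmx ->
  (forall x, x *m M = 0 -> x != 0 -> 0 < qform A x) ->
  (num_nonpos_eig A <= \rank M)%N.
Proof.
move=> herA qA_pos; have [P [d [uP _ A_eq]]] := hermitian_diagonalization herA.
rewrite A_eq in qA_pos *.
rewrite (num_nonpos_eig_diag _ uP) leqNgt; apply/negP => rk_lt.
have [|y [y_neq0 y_supp yPM]] :=
  supported_kernel_vector (N := P *m M) (I := [set i | d 0 i <= 0]).
  exact: leq_ltn_trans (mxrankM_maxr _ _) rk_lt.
have := qA_pos (y *m P); rewrite qform_unitary_diag // unitary_mulmx_eq0 //.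
rewrite -mulmxA yPM => /(_ erefl y_neq0) /lt_geF/negbT/negP; apply.
apply: sumr_le0 => i _.
have [di_le0|di_gt0] := boolP (d 0 i <= 0); last first.
  by rewrite y_supp ?inE // mul0r mulr0.
exact: mulr_le0_ge0 di_le0 (mul_conjC_ge0 _).
Qed.

Lemma nonpos_eig_ge_corank m A (M : 'M[algC]_(n, m)) : A \is hermsymmx ->
  (forall x, x *m M = 0 -> qform A x <= 0) ->
  (n - \rank M <= num_nonpos_eig A)%N.
Proof.
move=> herA qA_nonpos.
have [P [d [uP d_real A_eq]]] := hermitian_diagonalization herA.
rewrite A_eq in qA_nonpos *.
rewrite (num_nonpos_eig_diag _ uP) leqNgt; apply/negP => rk_lt.
set nonpos := [set i | d 0 i <= 0] in rk_lt *.
have := cardsC nonpos; rewrite card_ord => cardnonpos.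
have [|y [y_neq0 y_supp yPM]] :=
  supported_kernel_vector (I := ~: nonpos) (N := P *m M).
  apply: leq_ltn_trans (mxrankM_maxr _ _) _.
  by move: rk_lt cardnonpos; move: #|nonpos| #|~: nonpos| => p q; lia.
have := qA_nonpos (y *m P); rewrite qform_unitary_diag // -mulmxA yPM => /(_ erefl).
apply/negP/negbT/lt_geF.
have d_pos i : i \notin nonpos -> 0 < d 0 i.
  by rewrite inE real_ltNge ?real0 ?(mxOverP d_real).
have /matrix0Pn [r [i0]] := y_neq0; rewrite ord1 => yi0_neq0.
have i0_pos : i0 \notin nonpos.
  by apply: contraR yi0_neq0 => /negPn i0_np; apply/eqP/y_supp; rewrite in_setC negbK.
rewrite (bigD1 i0) //=; apply: ltr_pwDl.
  by rewrite mulr_gt0 ?d_pos ?mul_conjC_gt0.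
apply: sumr_ge0 => i _; have [iN|iP] := boolP (i \in nonpos).
  by rewrite y_supp ?mul0r ?mulr0 // in_setC iN.
by rewrite mulr_ge0 ?mul_conjC_ge0 // ltW // d_pos.
Qed.

End Inertia.

Section GraphSpectrum.
Variables (n : nat) (e : rel 'I_n).
Hypothesis e_simple : simple_graph e.

Lemma adjmx_hermitian : adjmx e \is hermsymmx.
Proof.
have [e_sym _] := e_simple; apply/is_hermitianmxP; rewrite expr0 scale1r.
by apply/matrixP => i j; rewrite !mxE e_sym conjC_nat.
Qed.

Definition support_mx (S : {set 'I_n}) : 'M[algC]_(n, #|~: S|) :=
  \matrix_(i, j) ((i == enum_val j)%:R).

Lemma support_mxP (S : {set 'I_n}) (x : 'rV[algC]_n) :
  x *m support_mx S = 0 -> forall i, i \notin S -> x 0 i = 0.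
Proof.
move=> xS0 i iS; have iSC : i \in ~: S by rewrite inE.
have := congr1 (fun v : 'rV_#|~: S| => v 0 (enum_rank_in iSC i)) xS0.
rewrite !mxE (bigD1 i) //= big1 ?addr0 => [|j ji].
  by rewrite mxE enum_rankK_in // eqxx mulr1.
by rewrite mxE enum_rankK_in // (negbTE ji) mulr0.
Qed.

(* An independent set S: the form of A(G) vanishes on vectors supported on
   S, a subspace of dimension |S|; so A(G) has >= |S| nonpositive eigenvalues. *)
Lemma indep_nonpos_eig (S : {set 'I_n}) :
  (forall x y, x \in S -> y \in S -> x != y -> ~~ e x y) ->
  (#|S| <= num_nonpos_eig (adjmx e))%N.
Proof.
move=> S_indep; have [_ e_irr] := e_simple.
have qS0 x : x *m support_mx S = 0 -> qform (adjmx e) x <= 0.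
  move=> xS0; rewrite qform_expand big1 // => i _; rewrite big1 // => j _.
  have [iS|iS] := boolP (i \in S); last by rewrite (support_mxP xS0 iS) !mul0r.
  have [jS|jS] := boolP (j \in S); last by rewrite (support_mxP xS0 jS) conjC0 mulr0.
  have [<-|ij] := eqVneq i j; first by rewrite mxE (negbTE (e_irr i)) mulr0 mul0r.
  by rewrite mxE (negbTE (S_indep _ _ iS jS ij)) mulr0 mul0r.
have := nonpos_eig_ge_corank adjmx_hermitian qS0.
have := rank_leq_col (support_mx S); have := cardsC S; rewrite card_ord; lia.
Qed.

(* A clique C: on vectors supported on C with zero sum the form equals
   -|x|^2 <= 0, a subspace of dimension |C| - 1. *)
Lemma clique_nonpos_eig (C : {set 'I_n}) :
  (forall x y, x \in C -> y \in C -> x != y -> e x y) ->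
  (#|C|.-1 <= num_nonpos_eig (adjmx e))%N.
Proof.
move=> C_clique; have [_ e_irr] := e_simple.
pose M := row_mx (support_mx C) (\col_i (((i \in C)%:R) : algC)).
have qM0 x : x *m M = 0 -> qform (adjmx e) x <= 0.
  rewrite mul_mx_row => /eqP; rewrite row_mx_eq0 => /andP [/eqP xC0 /eqP xsum0].
  have x_supp := support_mxP xC0.
  have sum0 : \sum_j x 0 j = 0.
    have := congr1 (fun v : 'M_1 => v 0 0) xsum0; rewrite !mxE => sum_eq.
    rewrite -[X in _ = X]sum_eq.
    apply: eq_bigr => j _; rewrite mxE.
    by have [jC|jC] := boolP (j \in C); rewrite ?mulr1 // x_supp // mul0r.
  have entry i j : x 0 i * adjmx e i j * (x 0 j)^* =
      x 0 i * (x 0 j)^* - x 0 i * (x 0 j)^* * (j == i)%:R.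
    have [iC|iC] := boolP (i \in C); last by rewrite x_supp // !mul0r subrr.
    have [jC|jC] := boolP (j \in C); last by rewrite (x_supp j) // conjC0 !mulr0 mul0r subrr.
    rewrite mxE; have [<-|ij] := eqVneq i j.
      by rewrite (negbTE (e_irr i)) mulr0 mul0r mulr1 subrr.
    by rewrite (C_clique _ _ iC jC ij) mulr1 mulr0 subr0.
  rewrite qform_expand; under eq_bigr do under eq_bigr do rewrite entry.
  under eq_bigr do rewrite sumrB sum_mul_delta -mulr_sumr -rmorph_sum sum0 rmorph0 mulr0 sub0r.
  by rewrite sumrN oppr_le0; apply: sumr_ge0 => i _; apply: mul_conjC_ge0.
have := nonpos_eig_ge_corank adjmx_hermitian qM0.
have : (\rank M <= #|~: C| + 1)%N by apply: rank_leq_col.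
have := cardsC C; rewrite card_ord; lia.
Qed.

End GraphSpectrum.

Lemma ramsey_npo k R : ramsey_prop k k.+1 R -> npo_prop k R.
Proof.
move=> ramseyR n nR e e_simple.
case: (ramseyR n nR e e_simple) => [[S [<- S_indep]]|[C [cardC C_clique]]].
- exact: indep_nonpos_eig.
- by have := clique_nonpos_eig e_simple C_clique; rewrite cardC.
Qed.

Section PairGraph.
Variable k : nat.

Definition small_subset : {pred {set 'I_k}} := fun S => (0 < #|S| <= 2)%N.

Local Notation n := #|small_subset|.

Definition vset (u : 'I_n) : {set 'I_k} := enum_val u.
Definition is_pair (u : 'I_n) : bool := #|vset u| == 2%N.

(* Distinct u, v are adjacent iff (they have the same size <-> they are
   disjoint): singletons are pairwise adjacent, pairs are adjacent when
   disjoint, a singleton and a pair when they meet. *)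
Definition pair_graph : rel 'I_n := fun u v =>
  (u != v) && ((is_pair u == is_pair v) == [disjoint vset u & vset v]).

Lemma pair_graph_simple : simple_graph pair_graph.
Proof.
split => [u v|u]; last by rewrite /pair_graph eqxx.
by rewrite /pair_graph eq_sym disjoint_sym [is_pair v == _]eq_sym.
Qed.

Lemma card_small_subset : n = (k + 'C(k, 2))%N.
Proof.
pose card_is m := [set S : {set 'I_k} | #|S| == m].
have -> : n = #|[predU card_is 1%N & card_is 2%N]|.
  by apply: eq_card => S; rewrite !inE /small_subset unfold_in; case: #|S| => [|[|[|]]].
have cardI0 : #|[predI card_is 1%N & card_is 2%N]| = 0%N.
  by apply: eq_card0 => S; rewrite !inE; case: #|S| => [|[|[|]]].
have := cardUI (card_is 1%N) (card_is 2%N); rewrite cardI0 addn0 => ->.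
by rewrite !card_draws card_ord bin1.
Qed.

Lemma card_vset u : #|vset u| = 1%N \/ #|vset u| = 2%N.
Proof. by have := enum_valP u; rewrite /vset /small_subset unfold_in /=; lia. Qed.

Lemma vset_inj : injective vset.
Proof. exact: enum_val_inj. Qed.

Lemma card_setI_small (S T : {set 'I_k}) : S != T ->
  (#|S| <= 2)%N -> (#|T| <= 2)%N -> #|S :&: T| = ~~ [disjoint S & T] :> nat.
Proof.
move=> ST cS cT; rewrite -setI_eq0 -cards_eq0.
case: (posnP #|S :&: T|) => [->//|cST_gt0] /=.
suff cST_lt2 : (#|S :&: T| < 2)%N by apply/eqP; rewrite eqn_leq -ltnS cST_lt2.
rewrite ltnNge; apply: contra ST => cST_ge2.
have /eqP SI : S :&: T == S by rewrite eqEcard subsetIl (leq_trans cS cST_ge2).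
have /eqP TI : S :&: T == T by rewrite eqEcard subsetIr (leq_trans cT cST_ge2).
by rewrite -SI TI.
Qed.

(* The adjacency matrix is a sum of Gram matrices plus a diagonal: with
   signs +1 on pairs and -1 on singletons, and B the signed vertex/point
   incidence matrix, A = J_pairs + J_singletons + D_pairs - B B^T. *)
Definition sign (u : 'I_n) : algC := if is_pair u then 1 else -1.
Definition incidence : 'M[algC]_(n, k) := \matrix_(u, c) (sign u * (c \in vset u)%:R).
Definition pair_col : 'M[algC]_(n, 1) := \matrix_(u, j) (is_pair u)%:R.
Definition single_col : 'M[algC]_(n, 1) := \matrix_(u, j) (~~ is_pair u)%:R.
Definition pair_diag : 'M[algC]_n := diag_mx (\row_u (is_pair u)%:R).

Lemma sum_indicator (S : {set 'I_k}) : \sum_c ((c \in S)%:R : algC) = #|S|%:R.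
Proof.
rewrite (bigID (mem S)) /= [X in _ + X]big1 ?addr0 => [|c /negbTE -> //].
by rewrite (eq_bigr (fun _ => 1)) => [|c ->//]; rewrite sumr_const.
Qed.

Lemma incidence_gram u v :
  (incidence *m incidence^T) u v = sign u * sign v * #|vset u :&: vset v|%:R.
Proof.
rewrite mxE -sum_indicator mulr_sumr; apply: eq_bigr => c _; rewrite !mxE inE.
by case: (c \in vset u); case: (c \in vset v); rewrite /= ?mulr0 ?mul0r ?mulr1 // mulrAC.
Qed.

Lemma adjmx_pair_graph : adjmx pair_graph =
  pair_col *m pair_col^T + single_col *m single_col^T + pair_diag
  - incidence *m incidence^T.
Proof.
apply/matrixP => u v.
rewrite [RHS]mxE [in RHS]mxE [in RHS]mxE [X in _ + X]mxE incidence_gram.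
rewrite !mxE !big_ord1 !mxE /pair_graph /sign /is_pair.
have [->|uv] := eqVneq u v.
  by rewrite eqxx /= setIid; case: (card_vset v) => ->; rewrite /=; ring.
have uv_vset : vset u != vset v by apply: contra uv => /eqP/vset_inj ->.
have cu := card_vset u; have cv := card_vset v.
rewrite card_setI_small //; [|by case: cu => ->|by case: cv => ->].
case: cu => ->; case: cv => -> /=; case: [disjoint _ & _] => //=; ring.
Qed.

End PairGraph.

Arguments small_subset k : clear implicits.

Section PairGraphForm.
Variable k1 : nat.
Local Notation k := k1.+1.
Local Notation n := #|small_subset k|.
Implicit Types x : 'rV[algC]_n.

(* w *m diff_mx = 0 iff all entries of the row vector w (of length k) agree;
   so constraint_mx, with only k - 1 columns, cuts out the x for which all
   entries of x B agree. *)
Definition diff_mx : 'M[algC]_(k, k1) :=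
  \matrix_(c, j) ((c == lift ord0 j)%:R - (c == ord0)%:R).
Definition constraint_mx : 'M[algC]_(n, k1) := @incidence k *m diff_mx.

Definition pair_sum x : algC := (x *m @pair_col k) 0 0.
Definition single_sum x : algC := (x *m @single_col k) 0 0.

Definition pair_mass x : algC := \sum_u (is_pair u)%:R * (x 0 u * (x 0 u)^*).

Lemma qform_pair_graph x :
  qform (adjmx (@pair_graph k)) x =
  pair_sum x * (pair_sum x)^* + single_sum x * (single_sum x)^* + pair_mass x
  - \sum_c (x *m @incidence k) 0 c * ((x *m @incidence k) 0 c)^*.
Proof.
have incidence_real : @incidence k \is a realmx.
  by apply/mxOverP => u c; rewrite mxE realM // /sign; case: is_pair; rewrite ?realN.
rewrite adjmx_pair_graph qformB !qformD !qform_gram ?realmx_nat // !big_ord1.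
by rewrite qform_diag; congr (_ + _ - _); apply: eq_bigr => u _; rewrite mxE.
Qed.

(* Row u of B has |vset u| nonzero entries, all equal to sign u; so summing
   the entries of x B weighs pairs by 2 and singletons by -1. *)
Lemma sum_incidence x :
  \sum_c (x *m @incidence k) 0 c = 2 * pair_sum x - single_sum x.
Proof.
under eq_bigr do rewrite mxE.
rewrite exchange_big /= /pair_sum /single_sum !mxE mulr_sumr -sumrB.
apply: eq_bigr => u _; rewrite -mulr_sumr.
under eq_bigr do rewrite mxE.
rewrite -mulr_sumr sum_indicator !mxE /sign /is_pair.
by case: (card_vset u) => ->; rewrite /=; ring.
Qed.

Lemma constraint_mxP x : x *m constraint_mx = 0 ->
  forall c, (x *m @incidence k) 0 c = (x *m @incidence k) 0 ord0.
Proof.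
move=> x0 c.
have lift_eq j : (x *m @incidence k) 0 (lift ord0 j) = (x *m @incidence k) 0 ord0.
  have := congr1 (fun v : 'rV_k1 => v 0 j) x0.
  rewrite /constraint_mx mulmxA mxE [RHS]mxE.
  under eq_bigr do rewrite [diff_mx _ _]mxE mulrBr.
  by rewrite sumrB !sum_mul_delta => /eqP; rewrite subr_eq0 => /eqP.
by case: (unliftP ord0 c) => [j ->|->].
Qed.

Lemma pair_mass_ge0 x : 0 <= pair_mass x.
Proof. by apply: sumr_ge0 => u _; rewrite mulr_ge0 ?mul_conjC_ge0. Qed.

Lemma pair_mass_eq0 x : pair_mass x = 0 -> forall u, is_pair u -> x 0 u = 0.
Proof.
move=> /psumr_eq0P mass0 u u_pair; apply/eqP; rewrite -mul_conjC_eq0.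
have := mass0 (fun v _ => mulr_ge0 (ler0n _ _) (mul_conjC_ge0 _)) u isT.
by rewrite u_pair mul1r => ->.
Qed.

(* On the kernel of constraint_mx all entries of x B are equal to some w,
   and k w = 2a - b for a = pair_sum x, b = single_sum x. As
   |2a - b|^2 + |a + 2b|^2 = 5 (|a|^2 + |b|^2), the form becomes a sum of
   nonnegative terms when k >= 5. *)
Lemma qform_constraint_kernel x : x *m constraint_mx = 0 ->
  k%:R * qform (adjmx (@pair_graph k)) x =
  (k%:R - 5) * (pair_sum x * (pair_sum x)^* + single_sum x * (single_sum x)^*)
  + (pair_sum x + 2 * single_sum x) * (pair_sum x + 2 * single_sum x)^*
  + k%:R * pair_mass x.
Proof.
move=> x0; have w_const := constraint_mxP x0.
rewrite qform_pair_graph rmorphD rmorphM /= conjC_nat.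
rewrite (eq_bigr _ (fun c _ => congr1 (fun z => z * z^*) (w_const c))).
rewrite sumr_const card_ord -[_ *+ k]mulr_natl.
set a := pair_sum x; set b := single_sum x; set w := (x *m @incidence k) 0 ord0.
have kw : k%:R * w = 2 * a - b.
  by rewrite -sum_incidence (eq_bigr _ (fun c _ => w_const c)) sumr_const card_ord mulr_natl.
have kw_conj : k%:R * w^* = 2 * a^* - b^*.
  by have := congr1 conjC kw; rewrite !rmorphM rmorphB /= rmorphM /= !conjC_nat.
transitivity (k%:R * (a * a^* + b * b^*) + k%:R * pair_mass x
  - (k%:R * w) * (k%:R * w^*)); first by ring.
by rewrite kw kw_conj; ring.
Qed.

(* If x vanishes on pairs, its (nonzero) values on singletons survive in
   x B, so w != 0 and a + 2b = -2 k w != 0. *)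
Lemma singleton_combination_neq0 x : x != 0 -> x *m constraint_mx = 0 ->
  (forall u, is_pair u -> x 0 u = 0) -> pair_sum x + 2 * single_sum x != 0.
Proof.
move=> x_neq0 x0 x_pairs; have w_const := constraint_mxP x0.
have a0 : pair_sum x = 0.
  rewrite /pair_sum mxE big1 // => u _; rewrite mxE.
  by case u_pair: (is_pair u); rewrite ?mulr0 // x_pairs ?mul0r.
have /matrix0Pn [r [u]] := x_neq0; rewrite ord1 => xu_neq0.
have u_single : is_pair u = false by apply: contraNF xu_neq0 => /x_pairs ->.
have [c vset_u] : exists c, vset u = [set c].
  by apply/cards1P; move: u_single; rewrite /is_pair; case: (card_vset u) => ->.
have wc : (x *m @incidence k) 0 c = - x 0 u.
  rewrite mxE (bigD1 u) //= big1 ?addr0 => [|v vu].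
    by rewrite mxE /sign u_single vset_u set11 mulr1 mulrN1.
  rewrite mxE; case v_pair: (is_pair v); first by rewrite x_pairs // mul0r.
  have [c' vset_v] : exists c', vset v = [set c'].
    by apply/cards1P; move: v_pair; rewrite /is_pair; case: (card_vset v) => ->.
  rewrite vset_v inE; case: eqP => [cc'|_]; last by rewrite !mulr0.
  by move/negP: vu; case; apply/eqP/vset_inj; rewrite vset_u vset_v cc'.
have w_neq0 : (x *m @incidence k) 0 ord0 != 0 by rewrite -(w_const c) wc oppr_eq0.
have kw := sum_incidence x.
rewrite (eq_bigr _ (fun c _ => w_const c)) sumr_const card_ord a0 mulr0 sub0r in kw.
rewrite a0 add0r -[single_sum x]opprK -kw -[_ *+ k]mulr_natl mulrN.
by rewrite oppr_eq0 !mulf_neq0 ?pnatr_eq0.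
Qed.

Lemma qform_pair_graph_pos x : (5 <= k)%N ->
  x *m constraint_mx = 0 -> x != 0 -> 0 < qform (adjmx (@pair_graph k)) x.
Proof.
move=> k_ge5 x0 x_neq0; rewrite -(pmulr_rgt0 _ (ltr0Sn _ k1)).
rewrite qform_constraint_kernel //.
set ab := pair_sum x + 2 * single_sum x.
have ab_ge0 : 0 <= ab * ab^* by apply: mul_conjC_ge0.
have sq_ge0 : 0 <= (k%:R - 5) *
    (pair_sum x * (pair_sum x)^* + single_sum x * (single_sum x)^*).
  by apply: mulr_ge0; rewrite ?subr_ge0 ?ler_nat ?addr_ge0 ?mul_conjC_ge0.
have [mass0|mass_neq0] := eqVneq (pair_mass x) 0.
  rewrite mass0 mulr0 addr0 ltr_wpDl // mul_conjC_gt0.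
  exact: singleton_combination_neq0 x_neq0 x0 (pair_mass_eq0 mass0).
by rewrite ltr_wpDl ?addr_ge0 // mulr_gt0 ?ltr0Sn // lt0r mass_neq0 pair_mass_ge0.
Qed.

Lemma pair_graph_nonpos_eig : (5 <= k)%N ->
  (num_nonpos_eig (adjmx (@pair_graph k)) <= k1)%N.
Proof.
move=> k_ge5; apply: leq_trans (rank_leq_col constraint_mx).
apply: nonpos_eig_le_rank (adjmx_hermitian (pair_graph_simple k)) _.
by move=> x; apply: qform_pair_graph_pos.
Qed.

End PairGraphForm.

Lemma npo_gt_triangular k N : (5 <= k)%N -> npo_prop k N -> (k * k.+1 %/ 2 < N)%N.
Proof.
case: k => [//|k1] k_ge5 npoN; rewrite ltnNge; apply/negP => N_le.
have triangular : (k1.+1 * k1.+2 %/ 2 = #|small_subset k1.+1|)%N.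
  by rewrite card_small_subset mulnC divn2 -bin2 binS bin1 addnC.
have := npoN _ (leq_trans N_le (eq_leq triangular)) _ (pair_graph_simple k1.+1).
have := pair_graph_nonpos_eig k_ge5; lia.
Qed.

Section Ramsey.
Variable T : finType.
Implicit Types (e : rel T) (S X : {set T}).

Definition homogeneous e (c : bool) S : Prop :=
  forall x y, x \in S -> y \in S -> x != y -> e x y = c.

Lemma homogeneous_add e c S v : symmetric e -> (forall y, y \in S -> e v y = c) ->
  homogeneous e c S -> homogeneous e c (v |: S).
Proof.
move=> e_sym vS S_hom x y; rewrite !inE.
move=> /predU1P[->|xS] /predU1P[->|yS]; rewrite ?eqxx //; last exact: S_hom.
  by move=> _; apply: vS.
by move=> _; rewrite e_sym; apply: vS.
Qed.

End Ramsey.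

Definition ramsey_bound (a b N : nat) : Prop :=
  forall (T : finType) (e : rel T), symmetric e ->
  forall X : {set T}, (N <= #|X|)%N ->
  exists c : bool, exists2 S : {set T}, S \subset X &
    #|S| = (if c then b else a) /\ homogeneous e c S.

(* Finite Ramsey theorem, by the recursion R(a+1, b+1) <= R(a, b+1) + R(a+1, b):
   a vertex v of X has either many neighbours or many non-neighbours in X,
   and a homogeneous set there either avoids the colour of v's relation to
   it or can be extended by v. *)
Lemma ramsey_bound_exists a b : exists N, ramsey_bound a b N.
Proof.
elim: a b => [|a IHa] b.
  exists 0%N => T e _ X _; exists false; exists set0; rewrite ?sub0set ?cards0 //.
  by split=> // x y; rewrite inE.
elim: b => [|b IHb].
  exists 0%N => T e _ X _; exists true; exists set0; rewrite ?sub0set ?cards0 //.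
  by split=> // x y; rewrite inE.
have [Nf IHf] := IHa b.+1; have [Nt IHt] := IHb.
have IHc c : ramsey_bound (if c then a.+1 else a) (if c then b else b.+1)
    (if c then Nt else Nf) by case: c.
exists (Nf + Nt).+1 => T e e_sym X X_large.
have [v vX] : exists v, v \in X by apply/set0Pn; rewrite -card_gt0; lia.
pose nbhd c := [set y in X :\ v | e v y == c].
have [c nbhd_large] : exists c, ((if c then Nt else Nf) <= #|nbhd c|)%N.
  have : (#|nbhd true| + #|nbhd false|)%N = #|X|.-1.
    rewrite (cardsD1 v X) vX -(cardsID [set y | e v y] (X :\ v)).
    by congr (_ + _)%N; apply: eq_card => y;
      rewrite !inE; case: (e v y); rewrite ?andbT ?andbF.
  by case: (leqP Nt #|nbhd true|) => [|?]; [exists true | exists false; lia].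
have [c' [S S_nbhd [cardS S_hom]]] := IHc c T e e_sym (nbhd c) nbhd_large.
have S_sub : S \subset X :\ v.
  by apply/subsetP => y /(subsetP S_nbhd); rewrite inE => /andP[].
have [c'c|c'c] := eqVneq c' c; last first.
  exists c', S; first exact: subset_trans S_sub (subD1set X v).
  by split=> //; rewrite cardS; move: c'c; case: (c); case: (c').
subst c'; exists c, (v |: S); last split.
- by rewrite subUset sub1set vX (subset_trans S_sub (subD1set X v)).
- have vS : v \notin S by apply/negP => /(subsetP S_sub); rewrite !inE eqxx.
  by rewrite cardsU1 vS cardS; case: (c).
- apply: homogeneous_add S_hom => // y /(subsetP S_nbhd).
  by rewrite inE => /andP[_ /eqP].
Qed.

Lemma ramsey_exists a b : exists N, ramsey_prop a b N.
Proof.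
have [N ramseyN] := ramsey_bound_exists a b; exists N => n n_large e [e_sym _].
have [|[] [S _ [cardS S_hom]]] := ramseyN _ e e_sym setT; rewrite ?cardsT ?card_ord //.
- by right; exists S; split.
- by left; exists S; split=> // x y xS yS xy; rewrite S_hom.
Qed.

Lemma least_exists (P : nat -> Prop) : (exists n, P n) -> exists N, is_least P N.
Proof.
move=> [n Pn]; elim: n {-2}n (leqnn n) Pn => [|m IH] n n_le Pn.
  by exists n; split => // M _; lia.
have [[n' [n'_lt Pn']]|no_smaller] := classic (exists n', (n' < n)%N /\ P n').
  by apply: (IH n') => //; lia.
exists n; split => // M PM; rewrite leqNgt; apply/negP => M_lt.
by apply: no_smaller; exists M.
Qed.

Local Close Scope sesquilinear_scope.
Local Close Scope ring_scope.

Theorem mainTheorem12 (k : nat) (hk : 5 <= k) :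
  exists R N : nat, is_ramsey_number k k.+1 R /\ is_NPO k N /\
    N <= R /\ k * k.+1 %/ 2 < N.
Proof.
have [R [ramseyR R_least]] := least_exists (ramsey_exists k k.+1).
have [N [npoN N_least]] := least_exists (ex_intro _ R (ramsey_npo ramseyR)).
exists R, N; split; first by split.
split; first by split.
split.
- exact: N_least (ramsey_npo ramseyR).
- exact: npo_gt_triangular hk npoN.
Qed.
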